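(* Let $\phi$ be an admissible action density and let $\tilde\phi$ be its partial Legendre transform. Then: (1) For every $\rho>0$ the map $w\mapsto\phi(\rho,w)^{1/p}$ is a norm on $\mathbb R^d$ whose dual norm is $z\mapsto\tilde\phi(\rho,z)^{1/q}$, i.e. $\tilde\phi(\rho,z)^{1/q}=\sup_{w\neq0}\frac{w\cdot z}{\phi(\rho,w)^{1/p}}$ and $\phi(\rho,w)^{1/p}=\sup_{z\ne0}\frac{w\cdot z}{\tilde\phi(\rho,z)^{1/q}}$; in particular $\tilde\phi(\rho,\cdot)$ is $q$-homogeneous. (2) $\tilde\phi$ takes values in $[0,\infty)$ and, for every $z\in\mathbb R^d$, $\rho\mapsto\tilde\phi(\rho,z)$ is concave and nondecreasing on $(0,\infty)$; for every $w\in\mathbb R^d$, $\rho\mapsto\phi(\rho,w)$ is convex and nonincreasing on $(0,\infty)$. (3) There exist constants $a,b\ge0$, not both zero, such that $\tilde\phi(\rho,z)\le(a+b\rho)|z|^q$ and $\phi(\rho,w)\ge(a+b\rho)^{1-p}|w|^p$ for all $\rho>0$, $z,w\in\mathbb R^d$. (4) For every compact interval $[\rho_0,\rho_1]\subset(0,\infty)$ there is $C>0$ such that for all $\rho\in[\rho_0,\rho_1]$ and $w,z\in\mathbb R^d$: $C^{-1}|w|^p\le\phi(\rho,w)\le C|w|^p$ and $C^{-1}|z|^q\le\tilde\phi(\rho,z)\le C|z|^q$. Conversely, a function $\phi:(0,\infty)\times\mathbb R^d\to[0,\infty)$ is an admissible action density if and only if it admits the representation $\frac1p\phi(\rho,w)=\sup_{z\in\mathbb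 R^d}\big(w\cdot z-\frac1q\tilde\phi(\rho,z)\big)$ for all $\rho>0,w\in\mathbb R^d$, for some function $\tilde\phi:(0,\infty)\times\mathbb R^d\to[0,\infty)$ which is convex and $q$-homogeneous in $z$, satisfies $\tilde\phi(\rho,z)>0$ for $z\neq0$, and is concave in $\rho$.
   Context: $p\in(1,\infty)$ and $q=p/(p-1)$. An admissible action density is a function $\phi:(0,\infty)\times\mathbb R^d\to[0,\infty)$ which is convex, satisfies $\phi(\rho,\lambda w)=|\lambda|^p\phi(\rho,w)$ for all $\rho>0,\lambda\in\mathbb R,w\in\mathbb R^d$, and for which there is $\rho_0>0$ with $\phi(\rho_0,w)>0$ for all $w\ne0$. Its partial Legendre transform $\tilde\phi:(0,\infty)\times\mathbb R^d\to(-\infty,+\infty]$ is defined by $\frac1q\tilde\phi(\rho,z):=\sup_{w\in\mathbb R^d}\big(z\cdot w-\frac1p\phi(\rho,w)\big)$. *)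

From Stdlib Require Import Reals Lra ClassicalEpsilon.
From mathcomp Require Import ssreflect ssrfun ssrbool eqtype ssrnat seq fintype bigop.

Open Scope R_scope.

Definition vec (d : nat) := 'I_d -> R.

Definition vzero {d} : vec d := fun _ => 0.
Definition vadd {d} (u v : vec d) : vec d := fun i => u i + v i.
Definition vscale {d} (l : R) (u : vec d) : vec d := fun i => l * u i.

Definition dot {d} (u v : vec d) : R := \big[Rplus/R0]_(i < d) (u i * v i).
Definition enorm {d} (u : vec d) : R := sqrt (dot u u).

(* x^a for x >= 0 and real a, with the convention 0^a = 0 *)
Definition rpow (x a : R) : R := if Rle_dec x 0 then 0 else Rpower x a.

Definition conj_exp (p : R) : R := p / (p - 1).

(* supremum of a set of reals (meaningful when the least upper bound exists) *)
Definition sup (E : R -> Prop) : R := epsilon (inhabits 0) (fun l => is_lub E l).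

(* The partial Legendre transform:
   (1/q) tphi(rho,z) = sup_w ( z.w - (1/p) phi(rho,w) );
   it is a genuine real number exactly when the set below is bounded above
   (the set is always nonempty). *)
Definition legendre_set {d} (p : R) (phi : R -> vec d -> R) (rho : R) (z : vec d)
  : R -> Prop := fun y => exists w : vec d, y = dot z w - phi rho w / p.

Definition legendre_finite {d} (p : R) (phi : R -> vec d -> R) (rho : R) (z : vec d)
  : Prop := bound (legendre_set p phi rho z).

Definition ptilde {d} (p : R) (phi : R -> vec d -> R) (rho : R) (z : vec d) : R :=
  conj_exp p * sup (legendre_set p phi rho z).

Definition jointly_convex {d} (phi : R -> vec d -> R) : Prop :=
  forall r1 r2 (w1 w2 : vec d) t, 0 < r1 -> 0 < r2 -> 0 <= t <= 1 ->
    phi (t * r1 + (1 - t) * r2) (vadd (vscale t w1) (vscale (1 - t) w2))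
    <= t * phi r1 w1 + (1 - t) * phi r2 w2.

Definition homog {d} (p : R) (phi : R -> vec d -> R) : Prop :=
  forall rho l (w : vec d), 0 < rho -> phi rho (vscale l w) = rpow (Rabs l) p * phi rho w.

Definition nonneg_fun {d} (phi : R -> vec d -> R) : Prop :=
  forall rho (w : vec d), 0 < rho -> 0 <= phi rho w.

Definition admissible {d} (p : R) (phi : R -> vec d -> R) : Prop :=
  nonneg_fun phi /\ jointly_convex phi /\ homog p phi /\
  exists rho0, 0 < rho0 /\ forall w : vec d, w <> vzero -> 0 < phi rho0 w.

Definition is_norm {d} (N : vec d -> R) : Prop :=
  (forall w, 0 <= N w) /\ (forall w, N w = 0 -> w = vzero) /\
  (forall l w, N (vscale l w) = Rabs l * N w) /\
  (forall u v, N (vadd u v) <= N u + N v).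

Definition convex_pos (f : R -> R) : Prop :=
  forall x y t, 0 < x -> 0 < y -> 0 <= t <= 1 ->
    f (t * x + (1 - t) * y) <= t * f x + (1 - t) * f y.
Definition concave_pos (f : R -> R) : Prop := convex_pos (fun x => - f x).
Definition nondecr_pos (f : R -> R) : Prop := forall x y, 0 < x -> x <= y -> f x <= f y.
Definition nonincr_pos (f : R -> R) : Prop := forall x y, 0 < x -> x <= y -> f y <= f x.

Definition convex_vec {d} (f : vec d -> R) : Prop :=
  forall (u v : vec d) t, 0 <= t <= 1 ->
    f (vadd (vscale t u) (vscale (1 - t) v)) <= t * f u + (1 - t) * f v.

From HB Require Import structures.
From Stdlib Require Import Reals Lra Classical ClassicalEpsilon FunctionalExtensionality.
From mathcomp Require Import ssreflect ssrfun ssrbool eqtype ssrnat seq fintype bigop.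
Open Scope R_scope.

(* For rho > 0, N(w) = phi(rho,w)^(1/p) is a norm on R^d: convexity and
   p-homogeneity give the triangle inequality, and definiteness propagates from
   rho0 because phi(.,w) is nonincreasing.  By Young's inequality the Legendre
   transform of N^p/p is N_*^q/q with N_* the dual norm, so tphi(rho,.) = N_*^q.  Properties (1)-(4)
   of an admissible phi are then short consequences (concavity of tphi from joint
   convexity of phi, the growth bound from concavity, the interval bounds from norm
   equivalence at the endpoints), and the converse applies the same duality to
   the given tphi. *)

Lemma rpow_gt0 x a : 0 < x -> rpow x a = Rpower x a.
Proof. by rewrite /rpow; case: Rle_dec => //= ?; lra. Qed.

Lemma rpow_0 a : rpow 0 a = 0.
Proof. by rewrite /rpow; case: Rle_dec => //= ?; lra. Qed.

Lemma rpow_nonneg x a : 0 <= rpow x a.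
Proof. rewrite /rpow; case: Rle_dec => /= ?; [lra|left; apply: exp_pos]. Qed.

Lemma rpow_pos x a : 0 < x -> 0 < rpow x a.
Proof. by move=> Hx; rewrite rpow_gt0 //; apply: exp_pos. Qed.

Lemma rpow_rpow x a b : 0 <= x -> rpow (rpow x a) b = rpow x (a * b).
Proof.
  case=> [Hx|<-]; last by rewrite !rpow_0.
  by rewrite (rpow_gt0 x a) // rpow_gt0 ?Rpower_mult ?rpow_gt0 //; apply: exp_pos.
Qed.

Lemma rpow_1 x : 0 <= x -> rpow x 1 = x.
Proof. by case=> [Hx|<-]; [rewrite rpow_gt0 // Rpower_1|apply: rpow_0]. Qed.

Lemma rpow_mult x y a : 0 <= x -> 0 <= y -> rpow (x * y) a = rpow x a * rpow y a.
Proof.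
  case=> [Hx|<-]; last by rewrite Rmult_0_l !rpow_0 Rmult_0_l.
  case=> [Hy|<-]; last by rewrite Rmult_0_r !rpow_0 Rmult_0_r.
  by rewrite !rpow_gt0 ?Rpower_mult_distr //; nra.
Qed.

Lemma rpow_plus x a b : 0 < x -> rpow x (a + b) = rpow x a * rpow x b.
Proof. by move=> Hx; rewrite !rpow_gt0 // Rpower_plus. Qed.

Lemma rpow_opp x a : 0 < x -> rpow x (- a) = / rpow x a.
Proof. by move=> Hx; rewrite !rpow_gt0 // Rpower_Ropp. Qed.

Lemma rpow_inv_base x a : 0 < x -> rpow (/ x) a = / rpow x a.
Proof.
  move=> Hx; rewrite !rpow_gt0 //; last exact: Rinv_0_lt_compat.
  by rewrite /Rpower ln_Rinv // -exp_Ropp; f_equal; ring.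
Qed.

Lemma rpow_le x y a : 0 < a -> 0 <= x <= y -> rpow x a <= rpow y a.
Proof.
  move=> Ha [[Hx|<-] Hxy]; last by rewrite rpow_0; apply: rpow_nonneg.
  rewrite !rpow_gt0; try lra; apply: Rle_Rpower_l; lra.
Qed.

Lemma rpow_eq0 x a : 0 <= x -> rpow x a = 0 -> x = 0.
Proof. by case=> [Hx|//] E; have := rpow_pos x a Hx; lra. Qed.

Lemma rpow_root x r : 0 <= x -> 0 < r -> rpow (rpow x (1 / r)) r = x.
Proof.
  move=> Hx Hr; rewrite rpow_rpow //.
  have -> : 1 / r * r = 1 by field; lra.
  exact: rpow_1.
Qed.

Lemma rpow_pow_root x r : 0 <= x -> 0 < r -> rpow (rpow x r) (1 / r) = x.
Proof.
  move=> Hx Hr; rewrite rpow_rpow //.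
  have -> : r * (1 / r) = 1 by field; lra.
  exact: rpow_1.
Qed.

Lemma rpow_le_mul x L e r : 0 < r -> 0 <= x -> 0 <= L -> 0 <= e ->
  x <= L * e -> rpow x r <= rpow L r * rpow e r.
Proof. by move=> Hr Hx HL He H; rewrite -rpow_mult //; apply: rpow_le. Qed.

Lemma rpow_mul_le x c e r : 0 < r -> 0 <= c -> 0 <= e ->
  c * e <= x -> rpow c r * rpow e r <= rpow x r.
Proof.
  move=> Hr Hc He H; rewrite -rpow_mult //.
  by apply: rpow_le => //; split => //; apply: Rmult_le_pos.
Qed.

Lemma conj_exp_gt1 r : 1 < r -> 1 < conj_exp r.
Proof.
  move=> Hr; rewrite /conj_exp; apply: (Rmult_lt_reg_r (r - 1)); first lra.
  by rewrite /Rdiv Rmult_assoc Rinv_l; lra.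
Qed.

Lemma conj_exp_inv r : 1 < r -> / r + / conj_exp r = 1.
Proof. by move=> Hr; rewrite /conj_exp; field; lra. Qed.

Lemma conj_exp_invol r : 1 < r -> conj_exp (conj_exp r) = r.
Proof. by move=> Hr; rewrite /conj_exp; field; lra. Qed.

(* For s > 0, sg = s^(q-1) satisfies sg^p = s^q and sg s = s^q (equality in Young). *)
Lemma conj_pow r s : 1 < r -> 0 < s ->
  rpow (rpow s (conj_exp r - 1)) r = rpow s (conj_exp r) /\
  rpow s (conj_exp r - 1) * s = rpow s (conj_exp r).
Proof.
  move=> Hr Hs; split.
    rewrite rpow_rpow; last lra.
    by f_equal; rewrite /conj_exp; field; lra.
  have -> : rpow s (conj_exp r) = rpow s ((conj_exp r - 1) + 1) by f_equal; ring.
  by rewrite rpow_plus // rpow_1 //; lra.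
Qed.

(* Convexity of exp (it lies above its tangent at the mean), the source of Young's inequality. *)
Lemma exp_convex t X Y : 0 <= t <= 1 ->
  exp (t * X + (1 - t) * Y) <= t * exp X + (1 - t) * exp Y.
Proof.
  move=> Ht; set M := t * X + (1 - t) * Y.
  have EX : exp X = exp M * exp (X - M) by rewrite -exp_plus; f_equal; ring.
  have EY : exp Y = exp M * exp (Y - M) by rewrite -exp_plus; f_equal; ring.
  have tangentX := exp_ineq1_le (X - M); have tangentY := exp_ineq1_le (Y - M).
  have HM := exp_pos M.
  have Avg : t * (exp M * (1 + (X - M))) + (1 - t) * (exp M * (1 + (Y - M))) = exp M.
    by rewrite /M; ring.
  have BX : t * (exp M * (1 + (X - M))) <= t * (exp M * exp (X - M)).
    by apply: Rmult_le_compat_l; [lra|apply: Rmult_le_compat_l; lra].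
  have BY : (1 - t) * (exp M * (1 + (Y - M))) <= (1 - t) * (exp M * exp (Y - M)).
    by apply: Rmult_le_compat_l; [lra|apply: Rmult_le_compat_l; lra].
  rewrite EX EY; lra.
Qed.

Lemma young a b r : 1 < r -> 0 <= a -> 0 <= b ->
  a * b <= rpow a r / r + rpow b (conj_exp r) / conj_exp r.
Proof.
  move=> Hr Ha Hb; set r' := conj_exp r.
  have Hr' : 1 < r' := conj_exp_gt1 r Hr.
  have Hsum : / r + / r' = 1 := conj_exp_inv r Hr.
  have Hir : 0 < / r by apply: Rinv_0_lt_compat; lra.
  have Hir' : 0 < / r' by apply: Rinv_0_lt_compat; lra.
  have Pa := rpow_nonneg a r; have Pb := rpow_nonneg b r'.
  case: Ha => [Ha|<-]; last by rewrite Rmult_0_l rpow_0 /Rdiv; nra.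
  case: Hb => [Hb|<-]; last by rewrite Rmult_0_r rpow_0 /Rdiv; nra.
  rewrite !rpow_gt0 // /Rpower.
  have E : a * b = exp (/ r * (r * ln a) + (1 - / r) * (r' * ln b)).
    have -> : 1 - / r = / r' by lra.
    have -> : / r * (r * ln a) + / r' * (r' * ln b) = ln a + ln b by field; lra.
    by rewrite exp_plus !exp_ln.
  rewrite E /Rdiv (Rmult_comm (exp _) (/ r)) (Rmult_comm (exp (r' * _)) (/ r')).
  have -> : / r' = 1 - / r by lra.
  by apply: exp_convex; lra.
Qed.

Lemma sup_spec (E : R -> Prop) : bound E -> (exists x, E x) -> is_lub E (sup E).
Proof.
  move=> Hb Hne; have [m Hm] := completeness E Hb Hne.
  by apply: (epsilon_spec (inhabits 0) (fun l => is_lub E l)); exists m.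
Qed.

Lemma sup_eq (E : R -> Prop) l : is_lub E l -> sup E = l.
Proof.
  move=> H; have Hne : exists x, E x.
    apply: NNPP => N; have U : is_upper_bound E (l - 1).
      by move=> y Hy; exfalso; apply: N; exists y.
    by have := proj2 H _ U; lra.
  apply: (is_lub_u E _ _ _ H); apply: sup_spec => //.
  by exists l; apply: (proj1 H).
Qed.

Lemma le_lub (E : R -> Prop) l y : is_lub E l -> E y -> y <= l.
Proof. by move=> H; apply: (proj1 H). Qed.

Lemma lub_le (E : R -> Prop) l M : is_lub E l -> (forall y, E y -> y <= M) -> l <= M.
Proof. by move=> H HM; apply: (proj2 H). Qed.

Lemma lub_approx (E : R -> Prop) l eps : is_lub E l -> 0 < eps ->
  exists y, E y /\ l - eps < y.
Proof.
  move=> H He; apply: NNPP => N.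
  suff : l <= l - eps by lra.
  by apply: (lub_le E) => // y Hy; apply: Rnot_lt_le => C; apply: N; exists y.
Qed.

Lemma is_lub_intro (E : R -> Prop) l : (forall y, E y -> y <= l) ->
  (forall eps, 0 < eps -> exists y, E y /\ l - eps < y) -> is_lub E l.
Proof.
  move=> Hub Happ; split=> [y Hy|M HM]; first exact: Hub.
  apply: Rnot_lt_le => C; have [y [Ey Hy]] := Happ (l - M) ltac:(lra).
  by have := HM y Ey; lra.
Qed.

Lemma is_lub_ext (E F : R -> Prop) l : is_lub E l -> (forall y, E y <-> F y) -> is_lub F l.
Proof.
  move=> [Hub Hleast] HEF; split=> [y /HEF|M HM]; first exact: Hub.
  by apply: Hleast => y /HEF; apply: HM.
Qed.

Definition infR (f : R -> R) : R := - sup (fun y => exists t, y = - f t).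

Lemma infR_spec f m : (forall t, m <= f t) -> is_lub (fun y => exists t, y = - f t) (- infR f).
Proof.
  move=> Hm; rewrite /infR Ropp_involutive; apply: sup_spec; last by exists (- f 0), 0.
  by exists (- m) => y [t ->]; have := Hm t; lra.
Qed.

Lemma inf_le f m t : (forall t, m <= f t) -> infR f <= f t.
Proof.
  move=> Hm; suff : - f t <= - infR f by lra.
  by apply: (le_lub _ _ _ (infR_spec f m Hm)); exists t.
Qed.

Lemma le_inf f M : (forall t, M <= f t) -> M <= infR f.
Proof.
  move=> Hm; suff : - infR f <= - M by lra.
  by apply: (lub_le _ _ _ (infR_spec f M Hm)) => y [t ->]; have := Hm t; lra.
Qed.

Lemma Rplus_assoc' : associative Rplus. Proof. by move=> a b c; ring. Qed.
Lemma Rplus_comm' : commutative Rplus. Proof. by move=> a b; ring. Qed.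
Lemma Rplus_0_l' : left_id R0 Rplus. Proof. by move=> a; ring. Qed.
HB.instance Definition _ := Monoid.isComLaw.Build R R0 Rplus Rplus_assoc' Rplus_comm' Rplus_0_l'.

Lemma sum_le {d} (F G : 'I_d -> R) : (forall i, F i <= G i) ->
  \big[Rplus/R0]_(i < d) F i <= \big[Rplus/R0]_(i < d) G i.
Proof. by move=> H; apply: (big_rec2 (fun a b => a <= b)) => [|i a b _ Hab]; [lra|have := H i; lra]. Qed.

Lemma sum_nonneg {d} (F : 'I_d -> R) : (forall i, 0 <= F i) -> 0 <= \big[Rplus/R0]_(i < d) F i.
Proof. by move=> H; apply: (big_rec (fun a => 0 <= a)) => [|i a _ Ha]; [lra|have := H i; lra]. Qed.

Lemma sum_scal {d} (F : 'I_d -> R) c :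
  \big[Rplus/R0]_(i < d) (c * F i) = c * \big[Rplus/R0]_(i < d) F i.
Proof. by symmetry; apply: (big_morph (fun x => c * x)) => [x y|]; ring. Qed.

Lemma sum_plus {d} (F G : 'I_d -> R) : \big[Rplus/R0]_(i < d) (F i + G i)
  = \big[Rplus/R0]_(i < d) F i + \big[Rplus/R0]_(i < d) G i.
Proof. exact: big_split. Qed.

Lemma sum_abs {d} (F : 'I_d -> R) :
  Rabs (\big[Rplus/R0]_(i < d) F i) <= \big[Rplus/R0]_(i < d) Rabs (F i).
Proof.
  apply: (big_rec2 (fun a b => Rabs a <= b)) => [|i a b _ Hab]; first by rewrite Rabs_R0; lra.
  by have := Rabs_triang (F i) a; lra.
Qed.

Lemma sum_term {d} (F : 'I_d -> R) k : (forall i, 0 <= F i) -> F k <= \big[Rplus/R0]_(i < d) F i.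
Proof.
  move=> H; rewrite (bigD1 k) //=; set S := (X in F k + X).
  suff : 0 <= S by lra.
  by rewrite /S; apply: (big_rec (fun a => 0 <= a)) => [|i a _ Ha]; [lra|have := H i; lra].
Qed.

Lemma vec_ext {d} (u v : vec d) : (forall i, u i = v i) -> u = v.
Proof. exact: functional_extensionality. Qed.

Ltac vring := apply: vec_ext => ?; rewrite /vadd /vscale /vzero; ring.

Lemma vscale0 {d} (v : vec d) : vscale 0 v = vzero.
Proof. by vring. Qed.

Lemma vadd0l {d} (v : vec d) : vadd vzero v = v.
Proof. by vring. Qed.

Lemma vscale_zero {d} l : vscale l (@vzero d) = vzero.
Proof. by vring. Qed.

Definition ebas {d} (k : 'I_d) : vec d := fun i => if i == k then 1 else 0.
Definition sum1 {d} (v : vec d) : R := \big[Rplus/R0]_(i < d) Rabs (v i).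
Definition sumc (d : nat) : R := \big[Rplus/R0]_(i < d) 1.

Lemma ebas_neq0 {d} (k : 'I_d) : ebas k <> vzero.
Proof. by move=> /(f_equal (fun u => u k)); rewrite /ebas /vzero eqxx; lra. Qed.

Lemma some_nonzero {d} : (1 <= d)%nat -> exists v : vec d, v <> vzero.
Proof. by move=> Hd; exists (ebas (Ordinal Hd)); apply: ebas_neq0. Qed.

Lemma vec_decomp {d} (v : vec d) : v = \big[vadd/vzero]_(k < d) vscale (v k) (ebas k).
Proof.
  apply: vec_ext => i.
  rewrite (big_morph (fun u : vec d => u i) (id1 := 0) (op1 := Rplus)) //.
  rewrite (bigD1 i) //= big1 /= => [|k Hk]; first by rewrite /vscale /ebas eqxx /=; ring.
  by rewrite /vscale /ebas eq_sym (negbTE Hk) /=; ring.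
Qed.

Lemma sumc_pos d : (1 <= d)%nat -> 0 < sumc d.
Proof.
  move=> Hd; have := sum_term (fun _ : 'I_d => 1) (Ordinal Hd) (fun _ => Rle_0_1).
  by rewrite /sumc; lra.
Qed.

Lemma dot_comm {d} (u v : vec d) : dot u v = dot v u.
Proof. by apply: eq_bigr => i _; ring. Qed.

Lemma dot_add_r {d} (z u v : vec d) : dot z (vadd u v) = dot z u + dot z v.
Proof. by rewrite /dot /vadd -sum_plus; apply: eq_bigr => i _; ring. Qed.

Lemma dot_scale_r {d} (z u : vec d) l : dot z (vscale l u) = l * dot z u.
Proof. by rewrite /dot /vscale -sum_scal; apply: eq_bigr => i _; ring. Qed.

Lemma dot_add_l {d} (z u v : vec d) : dot (vadd u v) z = dot u z + dot v z.
Proof. by rewrite !(dot_comm _ z) dot_add_r. Qed.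

Lemma dot_scale_l {d} (z u : vec d) l : dot (vscale l u) z = l * dot u z.
Proof. by rewrite !(dot_comm _ z) dot_scale_r. Qed.

Lemma dot_zero_r {d} (z : vec d) : dot z vzero = 0.
Proof. by rewrite -(vscale0 vzero) dot_scale_r Rmult_0_l. Qed.

Lemma dot_zero_l {d} (z : vec d) : dot vzero z = 0.
Proof. by rewrite dot_comm dot_zero_r. Qed.

Lemma dot_bound {d} (z w : vec d) : dot z w <= \big[Rplus/R0]_(i < d) (Rabs (z i) * Rabs (w i)).
Proof.
  apply: Rle_trans (Rle_abs _) _; apply: Rle_trans (sum_abs _) _.
  by apply: sum_le => i; rewrite Rabs_mult; lra.
Qed.

Lemma dot_self_nonneg {d} (v : vec d) : 0 <= dot v v.
Proof. by apply: sum_nonneg => i; nra. Qed.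

Lemma dot_self_pos {d} (v : vec d) : v <> vzero -> 0 < dot v v.
Proof.
  move=> Hv; have [k Hk] : exists k, v k <> 0.
    apply: NNPP => N; apply: Hv; apply: vec_ext => i.
    by apply: NNPP => C; apply: N; exists i.
  have := sum_term (fun i => v i * v i) k (fun i => ltac:(nra)).
  by rewrite /dot; nra.
Qed.

Lemma enorm_nonneg {d} (v : vec d) : 0 <= enorm v.
Proof. exact: sqrt_pos. Qed.

Lemma enorm_pos {d} (v : vec d) : v <> vzero -> 0 < enorm v.
Proof. by move=> Hv; apply: sqrt_lt_R0; apply: dot_self_pos. Qed.

Lemma enorm_zero {d} : enorm (@vzero d) = 0.
Proof. by rewrite /enorm dot_zero_l sqrt_0. Qed.

Lemma enorm_sq {d} (v : vec d) : dot v v = enorm v * enorm v.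
Proof. by rewrite /enorm sqrt_sqrt //; apply: dot_self_nonneg. Qed.

Lemma abs_le_enorm {d} (v : vec d) k : Rabs (v k) <= enorm v.
Proof.
  rewrite /enorm -sqrt_Rsqr_abs; apply: sqrt_le_1_alt.
  by rewrite /Rsqr; apply: (sum_term (fun i => v i * v i)) => i; nra.
Qed.

Lemma enorm_le_sum1 {d} (v : vec d) : enorm v <= sum1 v.
Proof.
  have [H1 H2] : 0 <= sum1 v /\ dot v v <= sum1 v * sum1 v.
    apply: (big_rec2 (fun a b => 0 <= b /\ a <= b * b)) => [|i a b _ [Hb Hab]]; first lra.
    have Hvi : v i * v i = Rabs (v i) * Rabs (v i) by rewrite -Rabs_mult Rabs_right //; nra.
    by have := Rabs_pos (v i); nra.
  by rewrite /enorm -(sqrt_square (sum1 v)) //; apply: sqrt_le_1_alt.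
Qed.

Lemma sum1_le_enorm {d} (v : vec d) : sum1 v <= sumc d * enorm v.
Proof.
  rewrite /sum1 /sumc Rmult_comm -sum_scal.
  by apply: sum_le => i; have := abs_le_enorm v i; lra.
Qed.

Definition sublin {d} (P : vec d -> R) : Prop :=
  (forall l v, 0 <= l -> P (vscale l v) = l * P v) /\
  (forall u v, P (vadd u v) <= P u + P v).

Definition lin_along {d} (P : vec d -> R) (e : vec d) (a : R) : Prop :=
  forall v s, P (vadd v (vscale s e)) = P v + s * a.

(* The one-step extension: the largest functional below P that has slope a along e. *)
Definition slide {d} (P : vec d -> R) (e : vec d) (a : R) : vec d -> R :=
  fun v => infR (fun t => P (vadd v (vscale t e)) - t * a).

Lemma sublin_zero {d} (P : vec d -> R) : sublin P -> P vzero = 0.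
Proof. by move=> [Hh _]; have := Hh 0 vzero (Rle_refl 0); rewrite vscale0; lra. Qed.

Section Slide.
Variables (d : nat) (P : vec d -> R) (e : vec d) (a : R).
Hypothesis HP : sublin P.
(* The slope a is admissible: it lies between the one-sided derivatives of P along e. *)
Hypothesis Ha_up : a <= P e.
Hypothesis Ha_lo : - P (vscale (-1) e) <= a.

Lemma slide_lower v t : - P (vscale (-1) v) <= P (vadd v (vscale t e)) - t * a.
Proof.
  have [Hh Ht] := HP.
  have E : vscale t e = vadd (vadd v (vscale t e)) (vscale (-1) v) by vring.
  have T := Ht (vadd v (vscale t e)) (vscale (-1) v); rewrite -E in T.
  suff : t * a <= P (vscale t e) by lra.
  case: (Rle_lt_dec 0 t) => Ht0; first by rewrite Hh //; apply: Rmult_le_compat_l.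
  have -> : vscale t e = vscale (- t) (vscale (-1) e) by vring.
  by rewrite Hh; nra.
Qed.

Lemma slide_inf_le v t : slide P e a v <= P (vadd v (vscale t e)) - t * a.
Proof. exact: (inf_le _ _ t (slide_lower v)). Qed.

Lemma slide_le v : slide P e a v <= P v.
Proof.
  have := slide_inf_le v 0.
  have -> : vadd v (vscale 0 e) = v by vring.
  lra.
Qed.

Lemma slide_lin : lin_along (slide P e a) e a.
Proof.
  move=> v s; apply: Rle_antisym.
  - suff : slide P e a (vadd v (vscale s e)) - s * a <= slide P e a v by lra.
    apply: le_inf => t; have := slide_inf_le (vadd v (vscale s e)) (t - s).
    have -> : vadd (vadd v (vscale s e)) (vscale (t - s) e) = vadd v (vscale t e) by vring.
    lra.
  - apply: le_inf => t; have := slide_inf_le v (s + t).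
    have -> : vadd v (vscale (s + t) e) = vadd (vadd v (vscale s e)) (vscale t e) by vring.
    lra.
Qed.

Lemma slide_pres u b : lin_along P u b -> lin_along (slide P e a) u b.
Proof.
  move=> Hu v s.
  have E t : P (vadd (vadd v (vscale s u)) (vscale t e)) - t * a
           = (P (vadd v (vscale t e)) - t * a) + s * b.
    have := Hu (vadd v (vscale t e)) s.
    have -> : vadd (vadd v (vscale t e)) (vscale s u)
            = vadd (vadd v (vscale s u)) (vscale t e) by vring.
    lra.
  apply: Rle_antisym.
  - suff : slide P e a (vadd v (vscale s u)) - s * b <= slide P e a v by lra.
    by apply: le_inf => t; have := slide_inf_le (vadd v (vscale s u)) t; rewrite E; lra.
  - by apply: le_inf => t; rewrite E; have := slide_inf_le v t; lra.
Qed.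

Lemma slide_homog l v : 0 <= l -> slide P e a (vscale l v) = l * slide P e a v.
Proof.
  have [Hh _] := HP; case=> [Hl|<-]; last first.
    rewrite vscale0 Rmult_0_l; apply: Rle_antisym.
    - have := slide_inf_le vzero 0.
      have -> : vadd vzero (vscale 0 e) = @vzero d by vring.
      by rewrite (sublin_zero P HP); lra.
    - by apply: le_inf => t; have := slide_lower vzero t; rewrite vscale_zero (sublin_zero P HP); lra.
  apply: Rle_antisym.
  - suff : / l * slide P e a (vscale l v) <= slide P e a v.
      move=> H; have := Rmult_le_compat_l l _ _ (Rlt_le _ _ Hl) H.
      have -> : l * (/ l * slide P e a (vscale l v)) = slide P e a (vscale l v) by field; lra.
      lra.
    apply: le_inf => t; have := slide_inf_le (vscale l v) (l * t).
    have -> : vadd (vscale l v) (vscale (l * t) e) = vscale l (vadd v (vscale t e)) by vring.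
    rewrite Hh; last lra.
    move=> H; have := Rmult_le_compat_l (/ l) _ _ (Rlt_le _ _ (Rinv_0_lt_compat l Hl)) H.
    have -> : / l * (l * P (vadd v (vscale t e)) - l * t * a)
            = P (vadd v (vscale t e)) - t * a by field; lra.
    lra.
  - apply: le_inf => t; have := slide_inf_le v (t / l).
    have -> : vadd (vscale l v) (vscale t e) = vscale l (vadd v (vscale (t / l) e)).
      by apply: vec_ext => ?; rewrite /vadd /vscale; field; lra.
    rewrite Hh; last lra.
    move=> H; have := Rmult_le_compat_l l _ _ (Rlt_le _ _ Hl) H.
    have -> : l * (P (vadd v (vscale (t / l) e)) - t / l * a)
            = l * P (vadd v (vscale (t / l) e)) - t * a by field; lra.
    lra.
Qed.

Lemma slide_subadd u v : slide P e a (vadd u v) <= slide P e a u + slide P e a v.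
Proof.
  have [_ Ht] := HP.
  have K t1 t2 : slide P e a (vadd u v)
      <= (P (vadd u (vscale t1 e)) - t1 * a) + (P (vadd v (vscale t2 e)) - t2 * a).
    have := slide_inf_le (vadd u v) (t1 + t2).
    have -> : vadd (vadd u v) (vscale (t1 + t2) e)
            = vadd (vadd u (vscale t1 e)) (vadd v (vscale t2 e)) by vring.
    by have := Ht (vadd u (vscale t1 e)) (vadd v (vscale t2 e)); lra.
  suff : slide P e a (vadd u v) - slide P e a v <= slide P e a u by lra.
  apply: le_inf => t1; suff : slide P e a (vadd u v) - (P (vadd u (vscale t1 e)) - t1 * a)
                              <= slide P e a v by lra.
  by apply: le_inf => t2; have := K t1 t2; lra.
Qed.

Lemma slide_sublin : sublin (slide P e a).
Proof. by split; [move=> l v; apply: slide_homog|apply: slide_subadd]. Qed.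

End Slide.

(* Any sublinear P satisfies -P(-e) <= P(e), so a = P(e) is an admissible slope. *)
Lemma sublin_opp_le {d} (P : vec d -> R) e : sublin P -> - P (vscale (-1) e) <= P e.
Proof.
  move=> HP; have := proj2 HP e (vscale (-1) e).
  have -> : vadd e (vscale (-1) e) = vzero by vring.
  by rewrite sublin_zero //; lra.
Qed.

Lemma lin_along_val {d} (P : vec d -> R) e a : sublin P -> lin_along P e a -> P e = a.
Proof.
  move=> HP H; have := H vzero 1.
  have -> : vadd vzero (vscale 1 e) = e by vring.
  by rewrite sublin_zero //; lra.
Qed.

Lemma slide_basis {d} (l : seq 'I_d) (P : vec d -> R) : sublin P ->
  exists Q, sublin Q /\ (forall v, Q v <= P v) /\
    (forall u b, lin_along P u b -> lin_along Q u b) /\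
    (forall k, k \in l -> lin_along Q (ebas k) (Q (ebas k))).
Proof.
  elim: l P => [|k l IH] P HP.
    by exists P; do !split => //; move=> v; apply: Rle_refl.
  have Hup : P (ebas k) <= P (ebas k) := Rle_refl _.
  have Hlo := sublin_opp_le P (ebas k) HP.
  have [Q [HQ [Hle [Hpres Hk]]]] := IH _ (slide_sublin _ _ _ _ HP Hup Hlo).
  exists Q; do !split => //.
  - by move=> v; apply: Rle_trans (Hle v) _; apply: slide_le.
  - by move=> u b Hu; apply: Hpres; apply: slide_pres.
  - move=> j; rewrite in_cons => /orP [/eqP ->|Hj]; last exact: Hk.
    have Hl : lin_along Q (ebas k) (P (ebas k)) by apply: Hpres; apply: slide_lin.
    by rewrite (lin_along_val Q _ _ HQ Hl).
Qed.

Lemma lin_sum {d} (Q : vec d -> R) (v : vec d) (l : seq 'I_d) :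
  (forall k, k \in l -> lin_along Q (ebas k) (Q (ebas k))) ->
  forall x, Q (vadd x (\big[vadd/vzero]_(k <- l) vscale (v k) (ebas k)))
      = Q x + \big[Rplus/R0]_(k <- l) (Q (ebas k) * v k).
Proof.
  elim: l => [|k l IH] H x.
    rewrite !big_nil; have -> : vadd x vzero = x by vring.
    ring.
  rewrite !big_cons.
  have -> : vadd x (vadd (vscale (v k) (ebas k)) (\big[vadd/vzero]_(j <- l) vscale (v j) (ebas j)))
      = vadd (vadd x (\big[vadd/vzero]_(j <- l) vscale (v j) (ebas j))) (vscale (v k) (ebas k)).
    by vring.
  rewrite H ?in_cons ?eqxx // IH; first ring.
  by move=> j Hj; apply: H; rewrite in_cons Hj orbT.
Qed.

Lemma hahn_banach {d} (N : vec d -> R) : sublin N -> forall w,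
  exists a : vec d, (forall v, dot a v <= N v) /\ dot a w = N w.
Proof.
  move=> HN w.
  have Hup : N w <= N w := Rle_refl _.
  have Hlo := sublin_opp_le N w HN.
  have [Q [HQ [Hle [Hpres Hk]]]] :=
    slide_basis (index_enum 'I_d) _ (slide_sublin _ _ _ _ HN Hup Hlo).
  have Hw : lin_along Q w (N w) by apply: Hpres; apply: slide_lin.
  have Hdot v : Q v = dot (fun k => Q (ebas k)) v.
    have := lin_sum Q v (index_enum 'I_d) (fun k Hk' => Hk k Hk') vzero.
    by rewrite (sublin_zero Q HQ) Rplus_0_l vadd0l -vec_decomp.
  exists (fun k => Q (ebas k)); split.
  - by move=> v; rewrite -Hdot; apply: Rle_trans (Hle v) _; apply: slide_le.
  - by rewrite -Hdot; apply: (lin_along_val Q w).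
Qed.

(* The key step is a coordinatewise lower bound
   c |v_k| <= N(v), obtained by quotienting out the other coordinates one at a
   time with slide N e 0, the quotient seminorm inf_t N(v + t e). *)

Lemma lip_cont (f : R -> R) K : 0 <= K -> (forall s t, Rabs (f s - f t) <= K * Rabs (s - t)) ->
  forall c, continuity_pt f c.
Proof.
  move=> HK Hl c; rewrite /continuity_pt /continue_in /limit1_in /limit_in /= => eps He.
  exists (eps / (K + 1)); split.
    by apply: Rlt_gt; apply: Rdiv_lt_0_compat; lra.
  move=> x [_ Hx]; rewrite /R_dist in Hx *; have := Hl x c.
  have : K * Rabs (x - c) <= (K + 1) * Rabs (x - c) by have := Rabs_pos (x - c); nra.
  have : (K + 1) * Rabs (x - c) < eps.
    have E : eps = (K + 1) * (eps / (K + 1)) by field; lra.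
    by rewrite [X in _ < X]E; apply: Rmult_lt_compat_l; lra.
  lra.
Qed.

Lemma pos_inf_1d (f : R -> R) K b : 0 <= K ->
  (forall s t, Rabs (f s - f t) <= K * Rabs (s - t)) ->
  (forall t, 0 < f t) -> (forall t, K * Rabs t - b <= f t) ->
  exists m, 0 < m /\ forall t, m <= f t.
Proof.
  case=> [HK|<-] Hl Hp Hg; last first.
    exists (f 0); split=> [|t]; first exact: Hp.
    have := Hl t 0; rewrite Rmult_0_l => H.
    by have := Rle_abs (f t - f 0); have := Rle_abs (- (f t - f 0)); rewrite Rabs_Ropp; lra.
  set R1 := Rabs ((b + 1) / K).
  have HR1 : 0 <= R1 := Rabs_pos _.
  have [mx [Hmx _]] := continuity_ab_min f (- R1) R1 ltac:(lra)
                         (fun c _ => lip_cont f K ltac:(lra) Hl c).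
  exists (Rmin 1 (f mx)); split; first by apply: Rmin_glb_lt; [lra|apply: Hp].
  move=> t; case: (Rle_lt_dec (Rabs t) R1) => Ht.
  - apply: Rle_trans (Rmin_r _ _) _; apply: Hmx.
    by have := Rle_abs t; have := Rle_abs (- t); rewrite Rabs_Ropp; lra.
  - apply: Rle_trans (Rmin_l _ _) _; have := Hg t.
    have : b + 1 <= K * R1.
      have E : b + 1 = K * ((b + 1) / K) by field; lra.
      by rewrite [X in X <= _]E; apply: Rmult_le_compat_l; [lra|apply: Rle_abs].
    have : K * R1 <= K * Rabs t by apply: Rmult_le_compat_l; lra.
    lra.
Qed.

Definition seminorm {d} (N : vec d -> R) : Prop :=
  sublin N /\ (forall v, N (vscale (-1) v) = N v) /\ (forall v, 0 <= N v).

Lemma seminorm_abs {d} (N : vec d -> R) l v : seminorm N -> N (vscale l v) = Rabs l * N v.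
Proof.
  move=> [[Hh _] [Hs _]]; case: (Rle_lt_dec 0 l) => Hl.
    by rewrite Hh // Rabs_right //; lra.
  have -> : vscale l v = vscale (- l) (vscale (-1) v) by vring.
  by rewrite Hh ?Hs ?Rabs_left //; lra.
Qed.

Lemma norm_seminorm {d} (M : vec d -> R) : is_norm M -> seminorm M.
Proof.
  move=> [Hn [_ [Hh Ht]]]; do !split => //.
  - by move=> l v Hl; rewrite Hh Rabs_right //; lra.
  - by move=> v; rewrite Hh Rabs_Ropp Rabs_R1 Rmult_1_l.
Qed.

Section Quotient.
Variables (d : nat) (N : vec d -> R).
Hypothesis HN : seminorm N.

(* The slope 0 is admissible for a nonnegative functional. *)
Let Hup e : 0 <= N e := proj2 (proj2 HN) e.
Let Hlo e : - N (vscale (-1) e) <= 0.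
Proof. by have := proj2 (proj2 HN) (vscale (-1) e); lra. Qed.

Lemma quotient_seminorm e : seminorm (slide N e 0).
Proof.
  have L := slide_inf_le _ N e 0 (proj1 HN) (Hup e) (Hlo e).
  have [_ [Hs Hn]] := HN.
  split; first exact: slide_sublin (proj1 HN) (Hup e) (Hlo e).
  split=> v; last by apply: le_inf => t; have := Hn (vadd v (vscale t e)); lra.
  apply: Rle_antisym; apply: le_inf => t.
  - have := L (vscale (-1) v) (- t).
    have -> : vadd (vscale (-1) v) (vscale (- t) e) = vscale (-1) (vadd v (vscale t e)) by vring.
    by rewrite Hs; lra.
  - have := L v (- t).
    have -> : vadd v (vscale (- t) e) = vscale (-1) (vadd (vscale (-1) v) (vscale t e)) by vring.
    by rewrite Hs; lra.
Qed.

(* Quotienting along e_j (j <> i) preserves positivity on vectors with v_i <> 0: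
   the infimum over the line v + t e_j is attained away from infinity. *)
Lemma quotient_pos (i j : 'I_d) : j != i -> (forall v, v i <> 0 -> 0 < N v) ->
  forall v, v i <> 0 -> 0 < slide N (ebas j) 0 v.
Proof.
  move=> Hji Hpos v Hv; have [[_ Ht] [Hs Hn]] := HN.
  set f := fun t => N (vadd v (vscale t (ebas j))) - t * 0.
  have Lip s t : Rabs (f s - f t) <= N (ebas j) * Rabs (s - t).
    rewrite /f !Rmult_0_r !Rminus_0_r.
    have E1 : vadd v (vscale s (ebas j))
            = vadd (vadd v (vscale t (ebas j))) (vscale (s - t) (ebas j)) by vring.
    have E2 : vadd v (vscale t (ebas j))
            = vadd (vadd v (vscale s (ebas j))) (vscale (t - s) (ebas j)) by vring.
    have T1 := Ht (vadd v (vscale t (ebas j))) (vscale (s - t) (ebas j)).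
    have T2 := Ht (vadd v (vscale s (ebas j))) (vscale (t - s) (ebas j)).
    rewrite -E1 seminorm_abs // in T1; rewrite -E2 seminorm_abs // Rabs_minus_sym in T2.
    by apply: Rabs_le; lra.
  have Pf t : 0 < f t.
    rewrite /f Rmult_0_r Rminus_0_r; apply: Hpos.
    by rewrite /vadd /vscale /ebas eq_sym (negbTE Hji); lra.
  have Gr t : N (ebas j) * Rabs t - N v <= f t.
    rewrite /f Rmult_0_r Rminus_0_r.
    have E : vscale t (ebas j) = vadd (vadd v (vscale t (ebas j))) (vscale (-1) v) by vring.
    by have := Ht (vadd v (vscale t (ebas j))) (vscale (-1) v); rewrite -E seminorm_abs // Hs; lra.
  have [m [Hm Hb]] := pos_inf_1d f _ _ (Hn _) Lip Pf Gr.
  have : m <= slide N (ebas j) 0 v by apply: le_inf.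
  lra.
Qed.

End Quotient.

Lemma coord_lower_list {d} (i : 'I_d) (js : seq 'I_d) : forall N : vec d -> R,
  seminorm N -> (forall v, v i <> 0 -> 0 < N v) ->
  exists m, 0 < m /\ forall v, v i = 1 ->
    (forall k, k != i -> k \notin js -> v k = 0) -> m <= N v.
Proof.
  elim: js => [|j js IH] N HN Hpos.
    exists (N (ebas i)); split; first by apply: Hpos; rewrite /ebas eqxx; lra.
    move=> v H1 H2; have -> : v = ebas i; last lra.
    by apply: vec_ext => k; rewrite /ebas; case: (eqVneq k i) => [->|Hk] //; apply: H2.
  case: (eqVneq j i) => [Eji|Hji].
    have [m [Hm Hb]] := IH N HN Hpos; exists m; split=> // v H1 H2.
    apply: Hb => // k Hk Hk'; apply: H2 => //.
    by rewrite in_cons negb_or Hk' andbT Eji.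
  have [m [Hm Hb]] := IH _ (quotient_seminorm _ N HN (ebas j)) (quotient_pos _ N HN i j Hji Hpos).
  exists m; split=> // v H1 H2.
  set v' := vadd v (vscale (- v j) (ebas j)).
  have : m <= slide N (ebas j) 0 v'.
    apply: Hb; first by rewrite /v' /vadd /vscale /ebas eq_sym (negbTE Hji); lra.
    move=> k Hk Hk'; rewrite /v' /vadd /vscale /ebas.
    case: (eqVneq k j) => [->|Hkj]; first lra.
    have -> : v k = 0 by apply: H2 => //; rewrite in_cons negb_or Hkj Hk'.
    lra.
  have Hlo : - N (vscale (-1) (ebas j)) <= 0 by have := proj2 (proj2 HN) (vscale (-1) (ebas j)); lra.
  have := slide_inf_le _ N (ebas j) 0 (proj1 HN) (proj2 (proj2 HN) _) Hlo v' (v j).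
  have -> : vadd v' (vscale (v j) (ebas j)) = v by rewrite /v'; vring.
  lra.
Qed.

Lemma coord_bound {d} (N : vec d -> R) : seminorm N -> (forall v, v <> vzero -> 0 < N v) ->
  exists c, 0 < c /\ forall v k, c * Rabs (v k) <= N v.
Proof.
  move=> HN Hpos.
  have One (i : 'I_d) : exists m, 0 < m /\ forall v, m * Rabs (v i) <= N v.
    have [m [Hm Hb]] := coord_lower_list i (enum 'I_d) N HN
                          (fun v Hv => Hpos v (fun E => Hv (f_equal (fun u => u i) E))).
    exists m; split=> // v; case: (Req_dec (v i) 0) => [->|E].
      by rewrite Rabs_R0 Rmult_0_r; apply: (proj2 (proj2 HN)).
    set u := vscale (/ v i) v.
    have Eu : v = vscale (v i) u by apply: vec_ext => k; rewrite /u /vscale; field.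
    have H1 : u i = 1 by rewrite /u /vscale; field.
    have := Hb u H1 (fun k _ Hk => ltac:(by rewrite mem_enum in Hk)).
    rewrite [in N v]Eu seminorm_abs //; have := Rabs_pos (v i); nra.
  have All (l : seq 'I_d) : exists c, 0 < c /\ forall k, k \in l -> forall v, c * Rabs (v k) <= N v.
    elim: l => [|k l [c [Hc Hb]]]; first by exists 1; split=> //; lra.
    have [m [Hm Hbm]] := One k; exists (Rmin c m); split; first exact: Rmin_glb_lt.
    move=> j; rewrite in_cons => /orP [/eqP ->|Hj] v.
    - by apply: Rle_trans (Hbm v); apply: Rmult_le_compat_r; [apply: Rabs_pos|apply: Rmin_r].
    - by apply: Rle_trans (Hb j Hj v); apply: Rmult_le_compat_r; [apply: Rabs_pos|apply: Rmin_l].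
  have [c [Hc Hb]] := All (enum 'I_d).
  by exists c; split=> // v k; apply: Hb; rewrite mem_enum.
Qed.

Definition dualn {d} (M : vec d -> R) (z : vec d) : R :=
  sup (fun y => exists w, w <> vzero /\ y = dot w z / M w).

Lemma norm_pos {d} (M : vec d -> R) v : is_norm M -> v <> vzero -> 0 < M v.
Proof. by move=> [Hn [Hdef _]] Hv; case: (Hn v) => // /esym /Hdef. Qed.

Lemma norm_zero {d} (M : vec d -> R) : is_norm M -> M vzero = 0.
Proof. by move=> HM; apply: sublin_zero; apply: (proj1 (norm_seminorm M HM)). Qed.

Lemma norm_scale {d} (M : vec d -> R) l v : is_norm M -> M (vscale l v) = Rabs l * M v.
Proof. by move=> [_ [_ [Hh _]]]; apply: Hh. Qed.

Lemma div_le_iff a b c : 0 < b -> (a / b <= c <-> a <= c * b).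
Proof.
  move=> Hb; split=> H.
  - by have := Rmult_le_compat_r b _ _ (Rlt_le _ _ Hb) H; rewrite /Rdiv Rmult_assoc Rinv_l; lra.
  - by apply: (Rmult_le_reg_r b) => //; rewrite /Rdiv Rmult_assoc Rinv_l; lra.
Qed.

Section DualNorm.
Variables (d : nat) (M : vec d -> R).
Hypothesis Hd : (1 <= d)%nat.
Hypothesis HM : is_norm M.

(* w.z <= (|z|_1 / c) M(w): the defining supremum is finite. *)
Lemma dual_bound : exists c, 0 < c /\ forall z w, dot w z <= (sum1 z / c) * M w.
Proof.
  have [c [Hc Hb]] := coord_bound M (norm_seminorm M HM) (fun v => norm_pos M v HM).
  exists c; split=> // z w; apply: Rle_trans (dot_bound _ _) _.
  have -> : sum1 z / c * M w = \big[Rplus/R0]_(i < d) ((M w / c) * Rabs (z i)).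
    by rewrite sum_scal /sum1; field; lra.
  apply: sum_le => i; apply: Rmult_le_compat_r; first exact: Rabs_pos.
  apply: (Rmult_le_reg_l c) => //; have -> : c * (M w / c) = M w by field; lra.
  exact: Hb.
Qed.

Lemma dual_lub z : is_lub (fun y => exists w, w <> vzero /\ y = dot w z / M w) (dualn M z).
Proof.
  apply: sup_spec; last by have [w Hw] := some_nonzero Hd; eexists; exists w.
  have [c [Hc Hb]] := dual_bound; exists (sum1 z / c) => y [w [Hw ->]].
  by apply/div_le_iff; [apply: norm_pos|apply: Hb].
Qed.

Lemma dual_le z w : dot w z <= dualn M z * M w.
Proof.
  case: (classic (w = vzero)) => [->|Hw].
    by rewrite dot_zero_l norm_zero // Rmult_0_r; lra.
  apply/div_le_iff; first exact: norm_pos.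
  by apply: (le_lub _ _ _ (dual_lub z)); exists w.
Qed.

Lemma dualn_nonneg z : 0 <= dualn M z.
Proof.
  have [w Hw] := some_nonzero Hd; have Hp := norm_pos M w HM Hw.
  have := dual_le z w; have := dual_le z (vscale (-1) w).
  rewrite dot_scale_l (norm_scale M) // Rabs_Ropp Rabs_R1; nra.
Qed.

Lemma dualn_pos z : z <> vzero -> 0 < dualn M z.
Proof.
  move=> Hz; have := dual_le z z; have := dot_self_pos z Hz; have := norm_pos M z HM Hz.
  nra.
Qed.

Lemma dualn_scale_le l z : dualn M (vscale l z) <= Rabs l * dualn M z.
Proof.
  apply: (lub_le _ _ _ (dual_lub _)) => y [w [Hw ->]].
  apply/div_le_iff; first exact: norm_pos.
  rewrite dot_scale_r; have := dual_le z w; have := dual_le z (vscale (-1) w).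
  rewrite dot_scale_l (norm_scale M) // Rabs_Ropp Rabs_R1.
  have := dualn_nonneg z; have := proj1 HM w.
  case: (Rle_lt_dec 0 l) => Hl; [rewrite Rabs_right|rewrite Rabs_left]; try lra; nra.
Qed.

Lemma dualn_norm : is_norm (dualn M).
Proof.
  split; first exact: dualn_nonneg.
  split; first by move=> z Hz; apply: NNPP => C; have := dualn_pos z C; lra.
  split.
  - move=> l z; apply: Rle_antisym; first exact: dualn_scale_le.
    case: (Req_dec l 0) => [->|Hl].
      by rewrite Rabs_R0 Rmult_0_l; apply: dualn_nonneg.
    have := dualn_scale_le (/ l) (vscale l z).
    have -> : vscale (/ l) (vscale l z) = z by apply: vec_ext => i; rewrite /vscale; field.
    rewrite Rabs_inv => H; have Hal := Rabs_pos_lt l Hl.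
    have := Rmult_le_compat_l (Rabs l) _ _ (Rlt_le _ _ Hal) H.
    by have -> : Rabs l * (/ Rabs l * dualn M (vscale l z)) = dualn M (vscale l z) by field; lra.
  - move=> u v; apply: (lub_le _ _ _ (dual_lub _)) => y [w [Hw ->]].
    apply/div_le_iff; first exact: norm_pos.
    by rewrite dot_add_r; have := dual_le u w; have := dual_le v w; lra.
Qed.

Lemma legendre_dual r z : 1 < r ->
  is_lub (fun y => exists w, y = dot z w - rpow (M w) r / r)
         (rpow (dualn M z) (conj_exp r) / conj_exp r).
Proof.
  move=> Hr; have Hs := dualn_nonneg z; set s := dualn M z.
  have Hr' := conj_exp_gt1 r Hr; have Hi := conj_exp_inv r Hr.
  apply: is_lub_intro => [y [w ->]|eps He].
    rewrite dot_comm; have := dual_le z w; rewrite -/s.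
    by have := young (M w) s r Hr (proj1 HM w) Hs; lra.
  case: Hs => [Hs|Hs]; last first.
    exists 0; split; last by rewrite /s -Hs rpow_0 /Rdiv; lra.
    by exists vzero; rewrite dot_zero_r norm_zero // rpow_0 /Rdiv; ring.
  (* Scale a near-optimal direction w to the norm sg = s^(r'-1) that balances Young. *)
  set sg := rpow s (conj_exp r - 1); have Hsg : 0 < sg by apply: rpow_pos.
  have [E1 E2] := conj_pow r s Hr Hs; rewrite -/sg in E1 E2.
  have Heps : 0 < eps / sg by apply: Rdiv_lt_0_compat; lra.
  have [y [[w [Hw ->]] Hy]] := lub_approx _ _ (eps / sg) (dual_lub z) Heps.
  have Hp := norm_pos M w HM Hw; rewrite -/s in Hy.
  exists (dot z (vscale (sg / M w) w) - rpow (M (vscale (sg / M w) w)) r / r).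
  split; first by eexists.
  rewrite (norm_scale M) // dot_scale_r Rabs_right; last by apply: Rle_ge; apply: Rle_mult_inv_pos; lra.
  have -> : sg / M w * M w = sg by field; lra.
  rewrite E1 (dot_comm z w).
  have -> : sg / M w * dot w z = sg * (dot w z / M w) by field; lra.
  have : sg * (s - eps / sg) < sg * (dot w z / M w) by apply: Rmult_lt_compat_l.
  have -> : sg * (s - eps / sg) = sg * s - eps by field; lra.
  have -> : rpow s (conj_exp r) / conj_exp r = rpow s (conj_exp r) - rpow s (conj_exp r) / r.
    rewrite /Rdiv; have -> : / conj_exp r = 1 - / r by lra.
    ring.
  by rewrite Rmult_comm in E2; lra.
Qed.

(* The bidual norm is the norm itself (Hahn-Banach). *)
Lemma bidual w : is_lub (fun y => exists z, z <> vzero /\ y = dot z w / dualn M z) (M w).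
Proof.
  apply: is_lub_intro => [y [z [Hz ->]]|eps He].
    by apply/div_le_iff; [apply: dualn_pos|rewrite dot_comm Rmult_comm; apply: dual_le].
  case: (classic (w = vzero)) => [->|Hw].
    have [z Hz] := some_nonzero Hd; exists 0; split; last by rewrite norm_zero //; lra.
    by exists z; split=> //; rewrite dot_zero_r /Rdiv Rmult_0_l.
  have Hp := norm_pos M w HM Hw.
  have [a [Ha1 Ha2]] := hahn_banach M (proj1 (norm_seminorm M HM)) w.
  have Ha0 : a <> vzero by move=> E; rewrite E dot_zero_l in Ha2; lra.
  have Hda := dualn_pos a Ha0.
  have Hda1 : dualn M a <= 1.
    apply: (lub_le _ _ _ (dual_lub a)) => y [v [Hv ->]].
    by apply/div_le_iff; [apply: norm_pos|rewrite dot_comm Rmult_1_l; apply: Ha1].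
  exists (dot a w / dualn M a); split; first by exists a.
  rewrite Ha2; suff : M w <= M w / dualn M a by lra.
  have : 1 <= / dualn M a by rewrite -Rinv_1; apply: Rinv_le_contravar.
  by rewrite /Rdiv; nra.
Qed.

Lemma norm_sum_le (w : vec d) (l : seq 'I_d) :
  M (\big[vadd/vzero]_(k <- l) vscale (w k) (ebas k))
  <= \big[Rplus/R0]_(k <- l) (Rabs (w k) * M (ebas k)).
Proof.
  elim: l => [|k l IH]; first by rewrite !big_nil norm_zero //; lra.
  rewrite !big_cons; apply: Rle_trans (proj2 (proj2 (proj2 HM)) _ _) _.
  by rewrite (norm_scale M) //; lra.
Qed.

Lemma norm_upper : exists L, 0 < L /\ forall w, M w <= L * enorm w.
Proof.
  set Lm := \big[Rplus/R0]_(k < d) M (ebas k).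
  have HLm : 0 <= Lm by apply: sum_nonneg => k; apply: (proj1 HM).
  exists (Lm * sumc d + 1); split; first by have := sumc_pos d Hd; nra.
  move=> w; rewrite {1}(vec_decomp w); apply: Rle_trans (norm_sum_le _ _) _.
  apply: Rle_trans (_ : Lm * sum1 w <= _).
    rewrite /sum1 -sum_scal; apply: sum_le => i; rewrite Rmult_comm.
    apply: Rmult_le_compat_r; first exact: Rabs_pos.
    by apply: (sum_term (fun k => M (ebas k))) => k; apply: (proj1 HM).
  by have := sum1_le_enorm w; have := enorm_nonneg w; nra.
Qed.

Lemma norm_lower : exists c, 0 < c /\ forall w, c * enorm w <= M w.
Proof.
  have [c [Hc Hb]] := coord_bound M (norm_seminorm M HM) (fun v => norm_pos M v HM).
  have Hs := sumc_pos d Hd.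
  exists (c / sumc d); split=> [|w]; first exact: Rdiv_lt_0_compat.
  have : c * sum1 w <= sumc d * M w.
    rewrite /sum1 /sumc -sum_scal Rmult_comm -sum_scal.
    by apply: sum_le => i; have := Hb w i; lra.
  have := enorm_le_sum1 w => H1 H2; apply: (Rmult_le_reg_l (sumc d)) => //.
  have -> : sumc d * (c / sumc d * enorm w) = c * enorm w by field; lra.
  nra.
Qed.

Lemma dual_upper : exists K, 0 < K /\ forall z, dualn M z <= K * enorm z.
Proof.
  have [c [Hc Hb]] := dual_bound; have Hs := sumc_pos d Hd.
  exists (sumc d / c); split=> [|z]; first exact: Rdiv_lt_0_compat.
  apply: (lub_le _ _ _ (dual_lub z)) => y [w [Hw ->]]; have Hp := norm_pos M w HM Hw.
  apply/div_le_iff => //; apply: Rle_trans (Hb z w) _.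
  apply: Rmult_le_compat_r; first lra.
  rewrite /Rdiv Rmult_assoc (Rmult_comm (/ c)) -Rmult_assoc.
  apply: Rmult_le_compat_r; first by left; apply: Rinv_0_lt_compat.
  exact: sum1_le_enorm.
Qed.

Lemma dual_lower : exists k, 0 < k /\ forall z, k * enorm z <= dualn M z.
Proof.
  have [L [HL Hb]] := norm_upper.
  exists (/ L); split=> [|z]; first exact: Rinv_0_lt_compat.
  case: (classic (z = vzero)) => [->|Hz].
    by rewrite enorm_zero Rmult_0_r; apply: dualn_nonneg.
  have He := enorm_pos z Hz; have := dual_le z z; rewrite enorm_sq.
  have := Hb z; have := dualn_nonneg z => H0 H1 H2.
  have H3 : enorm z <= dualn M z * L by nra.
  apply: (Rmult_le_reg_l L) => //.
  have -> : L * (/ L * enorm z) = enorm z by field; lra.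
  lra.
Qed.

Lemma norm_lower_of_dual B : 0 < B -> (forall z, dualn M z <= B * enorm z) ->
  forall w, enorm w / B <= M w.
Proof.
  move=> HB Hb w; apply/div_le_iff => //.
  case: (classic (w = vzero)) => [->|Hw].
    by rewrite enorm_zero norm_zero //; lra.
  have He := enorm_pos w Hw; have := dual_le w w; rewrite enorm_sq.
  have := Hb w; have := proj1 HM w; nra.
Qed.

End DualNorm.

Section PowerNorm.
Variables (d : nat) (F : vec d -> R) (r : R).
Hypothesis Hr : 0 < r.
Hypothesis Fnonneg : forall w, 0 <= F w.
Hypothesis Fconvex : convex_vec F.
Hypothesis Fhomog : forall l w, F (vscale l w) = rpow (Rabs l) r * F w.
Hypothesis Fpos : forall w, w <> vzero -> 0 < F w.

Let root w := rpow (F w) (1 / r).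

Lemma pow_zero : F vzero = 0.
Proof. by have := Fhomog 0 vzero; rewrite vscale0 Rabs_R0 rpow_0; lra. Qed.

Lemma pow_normalise x : x <> vzero -> F (vscale (/ root x) x) = 1.
Proof.
  move=> Hx; have HF := Fpos x Hx.
  have Hc : 0 < root x by apply: rpow_pos.
  rewrite Fhomog Rabs_right; last by left; apply: Rinv_0_lt_compat.
  rewrite rpow_inv_base // /root rpow_root; [field; lra|lra|lra].
Qed.

(* Minkowski: u + v is (a + b) times a convex combination of the normalised
   vectors u / a and v / b, where a = root u and b = root v. *)
Lemma pow_triangle u v : root (vadd u v) <= root u + root v.
Proof.
  case: (classic (u = vzero)) => [->|Hu].
    by rewrite vadd0l /root pow_zero rpow_0; lra.
  case: (classic (v = vzero)) => [->|Hv].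
    have -> : vadd u vzero = u by vring.
    by rewrite /root pow_zero rpow_0; lra.
  set a := root u; set b := root v.
  have Ha : 0 < a by apply: rpow_pos; apply: Fpos.
  have Hb : 0 < b by apply: rpow_pos; apply: Fpos.
  set t := a / (a + b).
  have Ht : 0 <= t <= 1.
    by rewrite /t; split; [apply: Rle_mult_inv_pos|apply/div_le_iff]; lra.
  have E : vadd u v
      = vscale (a + b) (vadd (vscale t (vscale (/ a) u)) (vscale (1 - t) (vscale (/ b) v))).
    by apply: vec_ext => i; rewrite /vadd /vscale /t; field; lra.
  have C := Fconvex (vscale (/ a) u) (vscale (/ b) v) t Ht.
  rewrite pow_normalise // pow_normalise // in C.
  rewrite /root E Fhomog Rabs_right; last lra.
  apply: Rle_trans (_ : rpow (rpow (a + b) r * 1) (1 / r) <= _).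
    apply: rpow_le; first by apply: Rdiv_lt_0_compat; lra.
    split; first by apply: Rmult_le_pos; [apply: rpow_nonneg|apply: Fnonneg].
    by apply: Rmult_le_compat_l; [apply: rpow_nonneg|lra].
  by rewrite Rmult_1_r rpow_pow_root; lra.
Qed.

Lemma pow_norm : is_norm root.
Proof.
  split; first by move=> w; apply: rpow_nonneg.
  split.
    move=> w Hw; apply: NNPP => C.
    by have := Fpos w C; have := rpow_eq0 _ _ (Fnonneg w) Hw; lra.
  split; last exact: pow_triangle.
  move=> l w; rewrite /root Fhomog rpow_mult; [|apply: rpow_nonneg|apply: Fnonneg].
  rewrite rpow_rpow; last exact: Rabs_pos.
  have -> : r * (1 / r) = 1 by field; lra.
  by rewrite rpow_1 //; apply: Rabs_pos.
Qed.

End PowerNorm.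

Lemma lt_eps_le a b : (forall eps, 0 < eps -> a <= b + eps) -> a <= b.
Proof. by move=> H; apply: Rnot_lt_le => C; have := H ((a - b) / 2) ltac:(lra); lra. Qed.

Lemma le_of_scales A B : 0 <= A -> (forall s, 1 < s -> B <= s * A) -> B <= A.
Proof.
  move=> HA H; apply: lt_eps_le => eps He.
  have := H (1 + eps / (A + 1)) ltac:(have := Rdiv_lt_0_compat eps (A + 1) He ltac:(lra); lra).
  have : eps / (A + 1) * A <= eps.
    have -> : eps / (A + 1) * A = eps * (A / (A + 1)) by field; lra.
    have : A / (A + 1) <= 1 by apply/div_le_iff; lra.
    by nra.
  lra.
Qed.

Lemma le_div_reg a b c : 0 < c -> a / c <= b / c -> a <= b.
Proof.
  move=> Hc H; have := Rmult_le_compat_r c _ _ (Rlt_le _ _ Hc) H.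
  by rewrite /Rdiv !Rmult_assoc Rinv_l; lra.
Qed.

Lemma common_const l1 u1 l2 u2 : 0 < l1 -> 0 < l2 ->
  exists C, 0 < C /\ / C <= l1 /\ u1 <= C /\ / C <= l2 /\ u2 <= C.
Proof.
  move=> H1 H2; set C := Rmax (Rmax u1 u2) (Rmax (/ l1) (/ l2)).
  have Cu1 : u1 <= C by apply: Rle_trans (Rmax_l _ _) (Rmax_l _ _).
  have Cu2 : u2 <= C by apply: Rle_trans (Rmax_r _ _) (Rmax_l _ _).
  have Cl1 : / l1 <= C by apply: Rle_trans (Rmax_l _ _) (Rmax_r _ _).
  have Cl2 : / l2 <= C by apply: Rle_trans (Rmax_r _ _) (Rmax_r _ _).
  have HC : 0 < C by have := Rinv_0_lt_compat l1 H1; lra.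
  have inv l : 0 < l -> / l <= C -> / C <= l.
    by move=> Hl H; rewrite -(Rinv_inv l); apply: Rinv_le_contravar => //; apply: Rinv_0_lt_compat.
  by exists C; do !split => //; apply: inv.
Qed.

Lemma lub_comb_le (A B : R -> Prop) X Y M t : is_lub A X -> is_lub B Y -> 0 <= t <= 1 ->
  (forall a b, A a -> B b -> t * a + (1 - t) * b <= M) -> t * X + (1 - t) * Y <= M.
Proof.
  move=> HX HY Ht H; apply: lt_eps_le => eps He.
  have [a [Aa Ha]] := lub_approx _ _ eps HX He.
  have [b [Bb Hb]] := lub_approx _ _ eps HY He.
  by have := H a b Aa Bb; nra.
Qed.

Definition action_norm {d} (p : R) (phi : R -> vec d -> R) (rho : R) (w : vec d) : R :=
  rpow (phi rho w) (1 / p).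

Section Admissible.
Variables (d : nat) (p : R) (phi : R -> vec d -> R).
Hypothesis Hd : (1 <= d)%nat.
Hypothesis Hp : 1 < p.
Hypothesis HA : admissible p phi.

Let q := conj_exp p.
Let Hq : 1 < q := conj_exp_gt1 p Hp.

Lemma adm_nonneg rho w : 0 < rho -> 0 <= phi rho w.
Proof. exact: (proj1 HA). Qed.

Lemma adm_zero rho : 0 < rho -> phi rho vzero = 0.
Proof.
  move=> Hr; have [_ [_ [Hh _]]] := HA.
  by have := Hh rho 0 vzero Hr; rewrite vscale0 Rabs_R0 rpow_0; lra.
Qed.

Lemma adm_convex_w rho : 0 < rho -> convex_vec (phi rho).
Proof.
  move=> Hr u v t Ht; have := proj1 (proj2 HA) rho rho u v t Hr Hr Ht.
  by have -> : t * rho + (1 - t) * rho = rho by ring.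
Qed.

Lemma adm_convex_rho w : convex_pos (fun rho => phi rho w).
Proof.
  move=> x y t Hx Hy Ht; have := proj1 (proj2 HA) x y w w t Hx Hy Ht.
  by have -> : vadd (vscale t w) (vscale (1 - t) w) = w by vring.
Qed.

(* Convexity between (x, w/t) and (sg, 0), where t x + (1 - t) sg = y, combined
   with p-homogeneity:  phi(y, w) <= t^(1-p) phi(x, w)  whenever t x < y. *)
Lemma adm_scale x y t w : 0 < x -> 0 < t < 1 -> t * x < y ->
  phi y w <= rpow t (1 - p) * phi x w.
Proof.
  move=> Hx Ht Hy; have [_ [Hc [Hh _]]] := HA.
  set sg := (y - t * x) / (1 - t).
  have Hsg : 0 < sg by apply: Rdiv_lt_0_compat; lra.
  have := Hc x sg (vscale (/ t) w) vzero t Hx Hsg ltac:(lra).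
  have -> : t * x + (1 - t) * sg = y by rewrite /sg; field; lra.
  have -> : vadd (vscale t (vscale (/ t) w)) (vscale (1 - t) vzero) = w.
    by apply: vec_ext => i; rewrite /vadd /vscale /vzero; field; lra.
  rewrite adm_zero // Rmult_0_r Rplus_0_r Hh // Rabs_right; last by left; apply: Rinv_0_lt_compat; lra.
  rewrite rpow_inv_base; last lra.
  have -> : rpow t (1 - p) = t * / rpow t p.
    by rewrite (_ : 1 - p = 1 + - p); [rewrite rpow_plus ?rpow_opp ?rpow_1; lra|ring].
  lra.
Qed.

(* phi(., w) is nonincreasing: let t -> 1 in adm_scale. *)
Lemma adm_nonincr w : nonincr_pos (fun rho => phi rho w).
Proof.
  move=> x y Hx Hxy /=; apply: le_of_scales => [|s Hs]; first exact: adm_nonneg.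
  set t := rpow s (/ (1 - p)).
  have Ht0 : 0 < t by apply: rpow_pos; lra.
  have Ht1 : t < 1.
    rewrite /t rpow_gt0; last lra.
    apply: Rlt_le_trans (_ : Rpower s 0 <= 1); last by rewrite Rpower_O; lra.
    by apply: Rpower_lt => //; apply: Rinv_lt_0_compat; lra.
  have -> : s = rpow t (1 - p).
    rewrite /t rpow_rpow; last lra.
    have -> : / (1 - p) * (1 - p) = 1 by field; lra.
    by rewrite rpow_1; lra.
  by apply: adm_scale => //; nra.
Qed.

(* Definiteness propagates from rho0 to every rho: downwards by monotonicity,
   upwards by adm_scale. *)
Lemma adm_pos rho w : 0 < rho -> w <> vzero -> 0 < phi rho w.
Proof.
  move=> Hr Hw; have [_ [_ [_ [r0 [Hr0 Hpos]]]]] := HA; have P0 := Hpos w Hw.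
  case: (Rle_lt_dec rho r0) => Hle.
    by have := adm_nonincr w rho r0 Hr Hle; lra.
  case: (adm_nonneg rho w Hr) => // H.
  set t := r0 / (2 * rho).
  have Ht : 0 < t < 1.
    split; first by apply: Rdiv_lt_0_compat; lra.
    by apply: (Rmult_lt_reg_r (2 * rho)); [lra|rewrite /t /Rdiv Rmult_assoc Rinv_l; lra].
  have Htr : t * rho < r0.
    have -> : t * rho = r0 / 2 by rewrite /t; field; lra.
    lra.
  by have := adm_scale rho r0 t w Hr Ht Htr; rewrite -H Rmult_0_r; lra.
Qed.


Lemma adm_norm rho : 0 < rho -> is_norm (action_norm p phi rho).
Proof.
  move=> Hr; apply: (pow_norm _ (phi rho) p); first lra.
  - by move=> w; apply: adm_nonneg.
  - exact: adm_convex_w.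
  - by move=> l w; apply: (proj1 (proj2 (proj2 HA))).
  - by move=> w; apply: adm_pos.
Qed.

Lemma action_norm_pow rho w : 0 < rho -> rpow (action_norm p phi rho w) p = phi rho w.
Proof. by move=> Hr; apply: rpow_root; [apply: adm_nonneg|lra]. Qed.

Lemma legendre_set_lub rho z : 0 < rho ->
  is_lub (legendre_set p phi rho z) (rpow (dualn (action_norm p phi rho) z) q / q).
Proof.
  move=> Hr; apply: (is_lub_ext _ _ _ (legendre_dual _ _ Hd (adm_norm rho Hr) p z Hp)) => y.
  by split=> [[w ->]|[w ->]]; exists w; rewrite action_norm_pow.
Qed.

Lemma ptilde_dual rho z : 0 < rho -> ptilde p phi rho z = rpow (dualn (action_norm p phi rho) z) q.
Proof. by move=> Hr; rewrite /ptilde (sup_eq _ _ (legendre_set_lub rho z Hr)) -/q; field; lra. Qed.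

Lemma ptilde_lub rho z : 0 < rho -> is_lub (legendre_set p phi rho z) (ptilde p phi rho z / q).
Proof. by move=> Hr; rewrite ptilde_dual //; apply: legendre_set_lub. Qed.

Lemma ptilde_root rho z : 0 < rho -> rpow (ptilde p phi rho z) (1 / q) = dualn (action_norm p phi rho) z.
Proof.
  move=> Hr; rewrite ptilde_dual // rpow_rpow; last exact: dualn_nonneg (adm_norm rho Hr) z.
  have -> : q * (1 / q) = 1 by field; lra.
  exact: rpow_1 (dualn_nonneg _ _ Hd (adm_norm rho Hr) z).
Qed.

Lemma ptilde_nonneg rho z : 0 < rho -> 0 <= ptilde p phi rho z.
Proof. by move=> Hr; rewrite ptilde_dual //; apply: rpow_nonneg. Qed.

Lemma ptilde_pos rho z : 0 < rho -> z <> vzero -> 0 < ptilde p phi rho z.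
Proof.
  move=> Hr Hz; rewrite ptilde_dual //.
  by apply: rpow_pos; apply: dualn_pos (adm_norm rho Hr) z Hz.
Qed.

Lemma ptilde_homog rho l z : 0 < rho ->
  ptilde p phi rho (vscale l z) = rpow (Rabs l) q * ptilde p phi rho z.
Proof.
  move=> Hr; have HD := dualn_norm _ _ Hd (adm_norm rho Hr).
  rewrite !ptilde_dual // (norm_scale _ _ _ HD) rpow_mult //; first exact: Rabs_pos.
  exact: (proj1 HD).
Qed.

(* Convex in z: a supremum of affine functions of z. *)
Lemma ptilde_convex_z rho : 0 < rho -> convex_vec (ptilde p phi rho).
Proof.
  move=> Hr u v t Ht; apply: (le_div_reg _ _ q); first lra.
  have -> : (t * ptilde p phi rho u + (1 - t) * ptilde p phi rho v) / q
          = t * (ptilde p phi rho u / q) + (1 - t) * (ptilde p phi rho v / q) by field; lra.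
  apply: (lub_le _ _ _ (ptilde_lub rho _ Hr)) => y [w ->].
  have := le_lub _ _ _ (ptilde_lub rho u Hr) (ex_intro _ w erefl).
  have := le_lub _ _ _ (ptilde_lub rho v Hr) (ex_intro _ w erefl).
  by rewrite dot_add_l !dot_scale_l; nra.
Qed.

(* Concave in rho: joint convexity of phi turns the combination of near-optimal
   w1, w2 at x, y into a competitor at t x + (1 - t) y. *)
Lemma ptilde_concave z : concave_pos (fun rho => ptilde p phi rho z).
Proof.
  move=> x y t Hx Hy Ht /=; set m := t * x + (1 - t) * y.
  have Hm : 0 < m by rewrite /m; nra.
  suff : t * (ptilde p phi x z / q) + (1 - t) * (ptilde p phi y z / q) <= ptilde p phi m z / q.
    move=> H; suff : t * ptilde p phi x z + (1 - t) * ptilde p phi y z <= ptilde p phi m z by lra.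
    apply: (le_div_reg _ _ q); first lra.
    have -> : (t * ptilde p phi x z + (1 - t) * ptilde p phi y z) / q
            = t * (ptilde p phi x z / q) + (1 - t) * (ptilde p phi y z / q) by field; lra.
    exact: H.
  apply: (lub_comb_le _ _ _ _ _ _ (ptilde_lub x z Hx) (ptilde_lub y z Hy) Ht) => _ _ [w1 ->] [w2 ->].
  set wm := vadd (vscale t w1) (vscale (1 - t) w2).
  have := le_lub _ _ _ (ptilde_lub m z Hm) (ex_intro _ wm erefl).
  have C := proj1 (proj2 HA) x y w1 w2 t Hx Hy Ht; rewrite -/m -/wm in C.
  rewrite /wm dot_add_r !dot_scale_r.
  have : phi m wm / p <= t * (phi x w1 / p) + (1 - t) * (phi y w2 / p).
    have -> : t * (phi x w1 / p) + (1 - t) * (phi y w2 / p) = (t * phi x w1 + (1 - t) * phi y w2) / p.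
      by field; lra.
    by apply: Rmult_le_compat_r; [left; apply: Rinv_0_lt_compat; lra|].
  rewrite /wm; lra.
Qed.

(* Nondecreasing in rho, since phi is nonincreasing. *)
Lemma ptilde_nondecr z : nondecr_pos (fun rho => ptilde p phi rho z).
Proof.
  move=> x y Hx Hxy /=; apply: (le_div_reg _ _ q); first lra.
  apply: (lub_le _ _ _ (ptilde_lub x z Hx)) => _ [w ->].
  apply: Rle_trans (le_lub _ _ _ (ptilde_lub y z ltac:(lra)) (ex_intro _ w erefl)).
  have := adm_nonincr w x y Hx Hxy; have : 0 < / p by apply: Rinv_0_lt_compat; lra.
  by rewrite /Rdiv; nra.
Qed.

(* Linear growth in rho, from concavity on [1/2, rho] and monotonicity below 1. *)
Lemma ptilde_linear_growth rho z : 0 < rho ->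
  ptilde p phi rho z <= (1 + 2 * rho) * ptilde p phi 1 z.
Proof.
  move=> Hr; have H1 := ptilde_nonneg 1 z Rlt_0_1; have H0 := ptilde_nonneg rho z Hr.
  case: (Rle_lt_dec rho 1) => Hle.
    by have := ptilde_nondecr z rho 1 Hr Hle; rewrite /=; nra.
  set t := / (2 * rho - 1).
  have Ht : 0 < t < 1.
    by split; [apply: Rinv_0_lt_compat|rewrite -Rinv_1; apply: Rinv_lt_contravar]; lra.
  have := ptilde_concave z rho (1 / 2) t Hr ltac:(lra) ltac:(lra); rewrite /=.
  have -> : t * rho + (1 - t) * (1 / 2) = 1 by rewrite /t; field; lra.
  have := ptilde_nonneg (1 / 2) z ltac:(lra) => H2 H3.
  have H4 : t * ptilde p phi rho z <= ptilde p phi 1 z by nra.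
  have := Rmult_le_compat_l (2 * rho - 1) _ _ ltac:(lra) H4.
  have -> : (2 * rho - 1) * (t * ptilde p phi rho z) = ptilde p phi rho z by rewrite /t; field; lra.
  nra.
Qed.

Lemma ptilde_growth : exists a, 0 < a /\ forall rho z, 0 < rho ->
  ptilde p phi rho z <= (a + 2 * a * rho) * rpow (enorm z) q.
Proof.
  have HN1 := adm_norm 1 Rlt_0_1.
  have [K [HK Hb]] := dual_upper _ _ Hd HN1.
  exists (rpow K q); split=> [|rho z Hr]; first exact: rpow_pos.
  apply: Rle_trans (ptilde_linear_growth rho z Hr) _.
  rewrite (ptilde_dual 1 z Rlt_0_1).
  have := rpow_le_mul _ K (enorm z) q ltac:(lra) (dualn_nonneg _ _ Hd HN1 z) ltac:(lra)
                     (enorm_nonneg z) (Hb z).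
  by have := rpow_nonneg (enorm z) q; have := rpow_pos K q HK; nra.
Qed.

Lemma phi_lower_of_ptilde rho A : 0 < rho -> 0 < A ->
  (forall z, ptilde p phi rho z <= A * rpow (enorm z) q) ->
  forall w, rpow A (1 - p) * rpow (enorm w) p <= phi rho w.
Proof.
  move=> Hr HA0 Hb w; have HN := adm_norm rho Hr.
  set B := rpow A (1 / q); have HB : 0 < B by apply: rpow_pos.
  have HqI : 0 < 1 / q by apply: Rdiv_lt_0_compat; lra.
  have Hdual z : dualn (action_norm p phi rho) z <= B * enorm z.
    rewrite -ptilde_root // -(rpow_pow_root (enorm z) q (enorm_nonneg z) ltac:(lra)) /B.
    apply: rpow_le_mul; [exact: HqI|exact: ptilde_nonneg|lra|exact: rpow_nonneg|exact: Hb].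
  have Hw := norm_lower_of_dual _ _ Hd HN B HB Hdual w.
  have := rpow_mul_le _ (/ B) (enorm w) p ltac:(lra) ltac:(left; apply: Rinv_0_lt_compat; lra)
                        (enorm_nonneg w) ltac:(rewrite Rmult_comm; exact: Hw).
  rewrite action_norm_pow // rpow_inv_base // /B rpow_rpow; last lra.
  have -> : 1 - p = - (1 / q * p) by rewrite /q /conj_exp; field; lra.
  by rewrite rpow_opp.
Qed.

Lemma growth_bounds : exists a b, 0 <= a /\ 0 <= b /\ ~ (a = 0 /\ b = 0) /\
  forall rho (z w : vec d), 0 < rho ->
    ptilde p phi rho z <= (a + b * rho) * rpow (enorm z) q /\
    rpow (a + b * rho) (1 - p) * rpow (enorm w) p <= phi rho w.
Proof.
  have [a [Ha Hb]] := ptilde_growth.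
  exists a, (2 * a); do 3 (split; first lra).
  move=> rho z w Hr; split; first exact: Hb.
  by apply: phi_lower_of_ptilde => //; [nra|move=> z'; apply: Hb].
Qed.

(* On [r0, r1] phi is squeezed between its values at the endpoints, and so is tphi
   (in the other order); at the endpoints all norms are equivalent to |.|. *)
Lemma interval_bounds r0 r1 : 0 < r0 -> r0 <= r1 ->
  exists C, 0 < C /\ forall rho (w z : vec d), r0 <= rho <= r1 ->
    / C * rpow (enorm w) p <= phi rho w /\ phi rho w <= C * rpow (enorm w) p /\
    / C * rpow (enorm z) q <= ptilde p phi rho z /\ ptilde p phi rho z <= C * rpow (enorm z) q.
Proof.
  move=> H0 H01; have H1 : 0 < r1 by lra.
  have HN0 := adm_norm r0 H0; have HN1 := adm_norm r1 H1.
  have [L0 [HL0 B1]] := norm_upper _ _ Hd HN0.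
  have [c1 [Hc1 B2]] := norm_lower _ _ Hd HN1.
  have [K1 [HK1 B3]] := dual_upper _ _ Hd HN1.
  have [k0 [Hk0 B4]] := dual_lower _ _ Hd HN0.
  have [C [HC [I1 [I2 [I3 I4]]]]] := common_const (rpow c1 p) (rpow L0 p) (rpow k0 q) (rpow K1 q)
    (rpow_pos _ _ Hc1) (rpow_pos _ _ Hk0).
  exists C; split=> // rho w z [Hr0 Hr1]; have Hr : 0 < rho by lra.
  have Ew := rpow_nonneg (enorm w) p; have Ez := rpow_nonneg (enorm z) q.
  have Pp : 0 < p by lra.
  have Pq : 0 < q by lra.
  split; [|split; [|split]].
  - have := adm_nonincr w rho r1 Hr Hr1; rewrite /= -(action_norm_pow r1) //.
    have := rpow_mul_le _ _ _ p Pp (Rlt_le _ _ Hc1) (enorm_nonneg w) (B2 w).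
    by have := Rmult_le_compat_r _ _ _ Ew I1; lra.
  - have := adm_nonincr w r0 rho H0 Hr0; rewrite /= -(action_norm_pow r0) //.
    have := rpow_le_mul _ _ _ p Pp (proj1 HN0 w) (Rlt_le _ _ HL0) (enorm_nonneg w) (B1 w).
    by have := Rmult_le_compat_r _ _ _ Ew I2; lra.
  - have := ptilde_nondecr z r0 rho H0 Hr0; rewrite /= (ptilde_dual r0) //.
    have := rpow_mul_le _ _ _ q Pq (Rlt_le _ _ Hk0) (enorm_nonneg z) (B4 z).
    by have := Rmult_le_compat_r _ _ _ Ez I3; lra.
  - have := ptilde_nondecr z rho r1 Hr Hr1; rewrite /= (ptilde_dual r1) //.
    have := rpow_le_mul _ _ _ q Pq (dualn_nonneg _ _ Hd HN1 z) (Rlt_le _ _ HK1) (enorm_nonneg z) (B3 z).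
    by have := Rmult_le_compat_r _ _ _ Ez I4; lra.
Qed.

(* phi is recovered from tphi by the inverse Legendre transform: the dual of the
   dual norm is the norm (bidual), and Young's equality case applies again. *)
Lemma ptilde_legendre rho w : 0 < rho ->
  is_lub (fun y => exists z : vec d, y = dot w z - ptilde p phi rho z / q) (phi rho w / p).
Proof.
  move=> Hr; have HN := adm_norm rho Hr; have HD := dualn_norm _ _ Hd HN.
  have L := legendre_dual _ _ Hd HD q w Hq; rewrite /q conj_exp_invol // in L.
  have E : dualn (dualn (action_norm p phi rho)) w = action_norm p phi rho w.
    apply: sup_eq; apply: (is_lub_ext _ _ _ (bidual _ _ Hd HN w)) => y.
    by split=> [[z [Hz ->]]|[z [Hz ->]]]; exists z.
  rewrite E action_norm_pow // in L.
  apply: (is_lub_ext _ _ _ L) => y.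
  by split=> [[z ->]|[z ->]]; exists z; rewrite ptilde_dual.
Qed.

Lemma norm_duality rho : 0 < rho ->
  is_norm (fun w => rpow (phi rho w) (1 / p)) /\
  is_norm (fun z => rpow (ptilde p phi rho z) (1 / q)) /\
  (forall z, is_lub (fun y => exists w : vec d, w <> vzero /\ y = dot w z / rpow (phi rho w) (1 / p))
                    (rpow (ptilde p phi rho z) (1 / q))) /\
  (forall w, is_lub (fun y => exists z : vec d,
                       z <> vzero /\ y = dot w z / rpow (ptilde p phi rho z) (1 / q))
                    (rpow (phi rho w) (1 / p))) /\
  (forall l z, ptilde p phi rho (vscale l z) = rpow (Rabs l) q * ptilde p phi rho z).
Proof.
  move=> Hr; have HN := adm_norm rho Hr.
  have Eroot : (fun z => rpow (ptilde p phi rho z) (1 / q)) = dualn (action_norm p phi rho).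
    by apply: functional_extensionality => z; apply: ptilde_root.
  rewrite Eroot; split; first exact: HN.
  split; first exact: dualn_norm.
  split; first by move=> z; rewrite ptilde_root //; apply: dual_lub.
  split; last by move=> l z; apply: ptilde_homog.
  move=> w; apply: (is_lub_ext _ _ _ (bidual _ _ Hd HN w)) => y.
  by split=> [[z [Hz ->]]|[z [Hz ->]]]; exists z; split=> //; rewrite ptilde_root // dot_comm.
Qed.

End Admissible.

Section Converse.
Variables (d : nat) (p : R) (phi psi : R -> vec d -> R).
Hypothesis Hd : (1 <= d)%nat.
Hypothesis Hp : 1 < p.
Hypothesis Pnonneg : nonneg_fun psi.
Hypothesis Pconvex : forall rho, 0 < rho -> convex_vec (psi rho).
Hypothesis Phomog : homog (conj_exp p) psi.
Hypothesis Ppos : forall rho z, 0 < rho -> z <> vzero -> 0 < psi rho z.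
Hypothesis Pconcave : forall z, concave_pos (fun rho => psi rho z).
Hypothesis Plegendre : forall rho w, 0 < rho ->
  is_lub (fun y => exists z : vec d, y = dot w z - psi rho z / conj_exp p) (phi rho w / p).

Let q := conj_exp p.
Let Hq : 1 < q := conj_exp_gt1 p Hp.

Lemma psi_norm rho : 0 < rho -> is_norm (action_norm q psi rho).
Proof.
  move=> Hr; apply: (pow_norm _ (psi rho) q); first lra.
  - by move=> z; apply: Pnonneg.
  - exact: Pconvex.
  - by move=> l z; apply: Phomog.
  - by move=> z; apply: Ppos.
Qed.

Lemma phi_dual_psi rho w : 0 < rho -> phi rho w = rpow (dualn (action_norm q psi rho) w) p.
Proof.
  move=> Hr; have L := legendre_dual _ _ Hd (psi_norm rho Hr) q w Hq.
  rewrite /q conj_exp_invol // in L.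
  have L' : is_lub (fun y => exists z : vec d, y = dot w z - psi rho z / conj_exp p)
              (rpow (dualn (action_norm q psi rho) w) p / p).
    apply: (is_lub_ext _ _ _ L) => y.
    by split=> [[z ->]|[z ->]]; exists z; rewrite (rpow_root _ q (Pnonneg rho z Hr)) //; lra.
  have E := is_lub_u _ _ _ (Plegendre rho w Hr) L'.
  by apply: (Rmult_eq_reg_r (/ p)) => //; apply: Rinv_neq_0_compat; lra.
Qed.

(* Joint convexity: phi/p is a supremum of functions of (rho, w) that are jointly
   convex, namely w.z - psi(rho,z)/q with psi concave in rho. *)
Lemma rep_jointly_convex : jointly_convex phi.
Proof.
  move=> r1 r2 w1 w2 t H1 H2 Ht; set m := t * r1 + (1 - t) * r2.
  have Hm : 0 < m by rewrite /m; nra.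
  apply: (le_div_reg _ _ p); first lra.
  have -> : (t * phi r1 w1 + (1 - t) * phi r2 w2) / p
          = t * (phi r1 w1 / p) + (1 - t) * (phi r2 w2 / p) by field; lra.
  apply: (lub_le _ _ _ (Plegendre m _ Hm)) => _ [z ->].
  have A1 := le_lub _ _ _ (Plegendre r1 w1 H1) (ex_intro _ z erefl).
  have A2 := le_lub _ _ _ (Plegendre r2 w2 H2) (ex_intro _ z erefl).
  have Cc := Pconcave z r1 r2 t H1 H2 Ht; rewrite /= -/m in Cc.
  have Hiq : 0 < / conj_exp p by apply: Rinv_0_lt_compat; rewrite -/q; lra.
  rewrite dot_add_l !dot_scale_l /Rdiv in A1 A2 *; nra.
Qed.

Lemma rep_admissible : nonneg_fun phi -> admissible p phi.
Proof.
  move=> Hn; split=> //; split; first exact: rep_jointly_convex.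
  split.
  - move=> rho l w Hr; rewrite !phi_dual_psi //.
    have HD := dualn_norm _ _ Hd (psi_norm rho Hr).
    rewrite (norm_scale _ _ _ HD) rpow_mult //; [exact: Rabs_pos|exact: (proj1 HD)].
  - exists 1; split=> [|w Hw]; first lra.
    rewrite phi_dual_psi; last lra.
    by apply: rpow_pos; apply: dualn_pos (psi_norm 1 Rlt_0_1) w Hw.
Qed.

End Converse.

Theorem mainTheorem1 (d : nat) (p : R) (Hd : (1 <= d)%nat) (Hp : 1 < p) :
  let q := conj_exp p in
  (forall phi : R -> vec d -> R, admissible p phi ->
    let tphi := ptilde p phi in
    (* (1) *)
    (forall rho, 0 < rho ->
       is_norm (fun w => rpow (phi rho w) (1 / p)) /\
       is_norm (fun z => rpow (tphi rho z) (1 / q)) /\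
       (forall z, is_lub (fun y => exists w : vec d, w <> vzero /\
                            y = dot w z / rpow (phi rho w) (1 / p))
                         (rpow (tphi rho z) (1 / q))) /\
       (forall w, is_lub (fun y => exists z : vec d, z <> vzero /\
                            y = dot w z / rpow (tphi rho z) (1 / q))
                         (rpow (phi rho w) (1 / p))) /\
       (forall l z, tphi rho (vscale l z) = rpow (Rabs l) q * tphi rho z)) /\
    (* (2) *)
    (forall rho z, 0 < rho -> legendre_finite p phi rho z /\ 0 <= tphi rho z) /\
    (forall z, concave_pos (fun rho => tphi rho z) /\ nondecr_pos (fun rho => tphi rho z)) /\
    (forall w, convex_pos (fun rho => phi rho w) /\ nonincr_pos (fun rho => phi rho w)) /\
    (* (3) *)
    (exists a b, 0 <= a /\ 0 <= b /\ ~ (a = 0 /\ b = 0) /\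
       forall rho (z w : vec d), 0 < rho ->
         tphi rho z <= (a + b * rho) * rpow (enorm z) q /\
         rpow (a + b * rho) (1 - p) * rpow (enorm w) p <= phi rho w) /\
    (* (4) *)
    (forall r0 r1, 0 < r0 -> r0 <= r1 ->
       exists C, 0 < C /\
         forall rho (w z : vec d), r0 <= rho <= r1 ->
           / C * rpow (enorm w) p <= phi rho w /\ phi rho w <= C * rpow (enorm w) p /\
           / C * rpow (enorm z) q <= tphi rho z /\ tphi rho z <= C * rpow (enorm z) q))
  /\
  (* converse characterization *)
  (forall phi : R -> vec d -> R, nonneg_fun phi ->
    (admissible p phi <->
     exists tphi : R -> vec d -> R,
       nonneg_fun tphi /\
       (forall rho, 0 < rho -> convex_vec (tphi rho)) /\
       homog q tphi /\
       (forall rho z, 0 < rho -> z <> vzero -> 0 < tphi rho z) /\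
       (forall z, concave_pos (fun rho => tphi rho z)) /\
       (forall rho w, 0 < rho ->
          is_lub (fun y => exists z : vec d, y = dot w z - tphi rho z / q)
                 (phi rho w / p)))).
Proof.
  move=> q; split=> [phi HA tphi|phi Hn].
  - split; first exact: norm_duality.
    split.
      move=> rho z Hr; split; last exact: ptilde_nonneg.
      by exists (tphi rho z / q); apply: (proj1 (ptilde_lub d p phi Hd Hp HA rho z Hr)).
    split.
      move=> z; split; first exact: (ptilde_concave d p phi Hd Hp HA).
      exact: (ptilde_nondecr d p phi Hd Hp HA).
    split.
      move=> w; split; first exact: (adm_convex_rho d p phi HA).
      exact: (adm_nonincr d p phi Hp HA).
    by split; [apply: growth_bounds|apply: interval_bounds].
  - split=> [HA|[psi [Pn [Pc [Ph [Pp [Pcc Pl]]]]]]]; last exact: (rep_admissible d p phi psi).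
    exists (ptilde p phi); split; [|split; [|split; [|split; [|split]]]].
    + by move=> rho z; apply: (ptilde_nonneg d p phi Hd Hp HA).
    + exact: (ptilde_convex_z d p phi Hd Hp HA).
    + by move=> rho l z; apply: (ptilde_homog d p phi Hd Hp HA).
    + exact: (ptilde_pos d p phi Hd Hp HA).
    + exact: (ptilde_concave d p phi Hd Hp HA).
    + exact: (ptilde_legendre d p phi Hd Hp HA).
Qed.
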